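(* Let $\Delta$ be a quasi-forest of dimension $d-1$ with $s+1$ facets and $f$-vector $(f_0,\ldots,f_{d-1})$, and put $f_{-1}=1$. Then there exist an integer $t$ with $0\le t\le s$ and sequences of integers $(\delta_1,\ldots,\delta_t,\delta_{t+1})$ and $(e_1,\ldots,e_t)$ with $\delta_i\neq e_j$ for all $i,j$, such that $0<\delta_1\le\cdots\le\delta_t\le\delta_{t+1}=d$, $0\le e_1\le\cdots\le e_t<d$, $e_j<\delta_j$ for $1\le j\le t$, and $$\sum_{i=0}^{d} f_{i-1}x^i=\sum_{j=1}^{t+1}(1+x)^{\delta_j}-\sum_{j=1}^{t}(1+x)^{e_j}.$$
   Context: A simplicial complex $\Delta$ on $[n]$ is a collection of subsets of $[n]$ containing all singletons and closed under taking subsets; $\dim\Delta=d-1$ where $d$ is the maximal face size; facets are maximal faces; $f_i$ is the number of faces with $i+1$ elements. For facets $F_{i_1},\ldots,F_{i_q}$, $\langle F_{i_1},\ldots,F_{i_q}\rangle$ is the subcomplex of all faces contained in some $F_{i_j}$. A facet $F$ is a leaf if there is another facet $G\neq F$ with $H\cap F\subset G\cap F$ for all facets $H\neq F$. A quasi-forest is a simplicial complex whose facets admit an ordering $H_1,\ldots,H_m$ such that for each $1<j\le m$, $H_j$ is a leaf of $\langle H_1,\ldots,H_j\rangle$. *)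

From HB Require Import structures.
From mathcomp Require Import all_boot all_order all_algebra.
Set Implicit Arguments. Unset Strict Implicit. Unset Printing Implicit Defensive.
Import GRing.Theory.

Definition simplicial_complex (n : nat) (D : {set {set 'I_n}}) : Prop :=
  (forall i : 'I_n, [set i] \in D) /\
  (forall F G : {set 'I_n}, F \in D -> G \subset F -> G \in D).

(* d = maximal face size (dim = d - 1). *)
Definition dsize (n : nat) (D : {set {set 'I_n}}) : nat := \max_(F in D) #|F|.

Definition facets (n : nat) (D : {set {set 'I_n}}) : {set {set 'I_n}} :=
  [set F in D | [forall G in D, (F \subset G) ==> (G == F)]].

(* f_{i-1} = number of faces with i elements *)
Definition fnum (n : nat) (D : {set {set 'I_n}}) (i : nat) : nat :=
  #|[set F in D | #|F| == i]|.

Definition gen (n : nat) (S : {set {set 'I_n}}) : {set {set 'I_n}} :=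
  [set F : {set 'I_n} | [exists G in S, F \subset G]].

Definition is_leaf (n : nat) (D : {set {set 'I_n}}) (F : {set 'I_n}) : Prop :=
  F \in facets D /\
  exists2 G, G \in facets D /\ G != F &
    forall H, H \in facets D -> H != F -> H :&: F \subset G :&: F.

(* quasi-forest: an ordering H_1..H_m of the facets such that H_j is a leaf
   of <H_1,...,H_j> for 1 < j <= m  (0-indexed: j = 1 .. m-1). *)
Definition quasi_forest (n : nat) (D : {set {set 'I_n}}) : Prop :=
  exists hs : seq {set 'I_n},
    [/\ uniq hs, [set x in hs] = facets D &
        forall j, 0 < j < size hs ->
          is_leaf (gen [set x in take j.+1 hs]) (nth set0 hs j)].

From mathcomp Require Import all_boot all_order all_algebra.
From mathcomp Require Import zify.
Import GRing.Theory.

Set Implicit Arguments.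
Unset Strict Implicit.
Unset Printing Implicit Defensive.

(* Adding the facets of a quasi-forest in leaf order, a leaf h with branch G
   contributes exactly the faces of h not contained in G :&: h, so the
   f-polynomial sum_F x^|F| equals sum_j (1+x)^|H_j| - sum_(j>1) (1+x)^|G_j :&: H_j|.
   Since |G_j :&: H_j| is smaller than both |H_j| and |G_j|, the exponent lists
   A and B satisfy a Hall-type counting condition: for x below max A, at most as
   many elements of A are <= x as elements of B are < x.  This survives
   cancelling the elements common to A and B, and for sorted lists it forces
   the j-th smallest element of B below the j-th smallest of A, which is the
   interlacing e_j < delta_j. *)

Section MultisetDifference.

Variable T : eqType.
Implicit Types A B : seq T.

Fixpoint mdiff A B : seq T := if B is b :: B' then mdiff (rem b A) B' else A.

Lemma count_mdiff A B x : count_mem x (mdiff A B) = count_mem x A - count_mem x B.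
Proof.
elim: B A => [|b B IH] A /=; first by rewrite subn0.
by rewrite IH count_mem_rem /=; lia.
Qed.

Lemma cancel_common A B : exists A' B' C,
  [/\ perm_eq A (A' ++ C), perm_eq B (B' ++ C) & forall x, x \in A' -> x \notin B'].
Proof.
exists (mdiff A B), (mdiff B A), (mdiff A (mdiff A B)).
split; try by apply/allP => x _; rewrite /= count_cat !count_mdiff; lia.
by move=> x; rewrite -!has_pred1 !has_count !count_mdiff; lia.
Qed.

End MultisetDifference.

Definition dominates (M : nat) (A B : seq nat) : Prop :=
  [/\ size A = (size B).+1, M \in A, all (fun a => a <= M) A, all (fun b => b < M) B
    & forall x, x < M -> count (fun a => a <= x) A <= count (fun b => b < x) B].

Lemma dominates1 a : dominates a [:: a] [::].
Proof. by split; rewrite /= ?mem_head ?leqnn // => x; rewrite ltnNge => /negbTE ->. Qed.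

Lemma dominates_rcons M A B a b : dominates M A B -> b < a -> b < M ->
  dominates (maxn M a) (rcons A a) (rcons B b).
Proof.
move=> [szAB MA AM BM hall] ba bM; split.
- by rewrite !size_rcons szAB.
- by rewrite mem_rcons in_cons; case: leqP => _; rewrite ?eqxx ?MA ?orbT.
- by rewrite all_rcons leq_maxr; apply: sub_all AM => y yM; rewrite leq_max yM.
- by rewrite all_rcons leq_max bM; apply: sub_all BM => y yM; rewrite leq_max yM.
move=> x; rewrite -!cats1 !count_cat /= !addn0.
have [xM _ | Mx] := ltnP x M.
  have := hall x xM; case: (leqP a x) => ax; last by lia.
  by rewrite (leq_trans ba ax); lia.
rewrite leq_max ltnNge Mx /= => xa; rewrite [a <= x]leqNgt xa (leq_trans bM Mx).
have /eqP -> : count (fun y => y <= x) A == size A.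
  by rewrite -all_count; apply: sub_all AM => y yM; apply: leq_trans Mx.
have /eqP -> : count (fun y => y < x) B == size B.
  by rewrite -all_count; apply: sub_all BM => y yM; apply: leq_trans Mx.
by rewrite szAB /= addn0 addn1.
Qed.

Lemma perm_dominates M A A' B B' :
  perm_eq A A' -> perm_eq B B' -> dominates M A B -> dominates M A' B'.
Proof.
move=> pA pB [szAB MA AM BM hall]; split.
- by rewrite -(perm_size pA) -(perm_size pB).
- by rewrite -(perm_mem pA).
- by rewrite -(perm_all _ pA).
- by rewrite -(perm_all _ pB).
by move=> x xM; rewrite -(permP pA) -(permP pB) hall.
Qed.

Lemma dominates_cancel_cat M A B C : dominates M (A ++ C) (B ++ C) -> dominates M A B.
Proof.
move=> [szAB MA + + hall]; rewrite !all_cat => /andP[AM _] /andP[BM CM]; split => //.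
- by move: szAB; rewrite !size_cat; lia.
- by move: MA; rewrite mem_cat => /orP[// | /(allP CM)]; rewrite ltnn.
move=> x xM; have := hall x xM; rewrite !count_cat.
have : count (fun y => y < x) C <= count (fun y => y <= x) C by apply: sub_count => y /ltnW.
by lia.
Qed.

Lemma dominates_cancel_common M A B : dominates M A B -> exists A' B' C,
  [/\ perm_eq A (A' ++ C), perm_eq B (B' ++ C), dominates M A' B'
    & forall x, x \in A' -> x \notin B'].
Proof.
move=> domAB; have [A' [B' [C [pA pB disj]]]] := cancel_common A B.
exists A', B', C; split => //.
exact/(dominates_cancel_cat (C := C))/(perm_dominates pA pB).
Qed.

Lemma nth_sorted_leq (s : seq nat) i j : sorted leq s -> i <= j -> j < size s ->
  nth 0 s i <= nth 0 s j.
Proof. by move=> ss ij js; apply: (sorted_leq_nth leq_trans leqnn); rewrite ?inE /=; lia. Qed.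

Lemma count_nth_sorted (s : seq nat) j : sorted leq s -> j < size s ->
  count (fun y => y < nth 0 s j) s <= j < count (fun y => y <= nth 0 s j) s.
Proof.
move=> ss js; set x := nth 0 s j; apply/andP; split.
  rewrite -(cat_take_drop j s) count_cat.
  have -> : count (fun y => y < x) (drop j s) = 0.
    apply/eqP; rewrite -leqn0 leqNgt -has_count; apply/(has_nthP 0) => -[i].
    by rewrite size_drop nth_drop /x => ilt; rewrite ltnNge nth_sorted_leq ?leq_addr //; lia.
  by rewrite addn0 (leq_trans (count_size _ _)) // size_take_min geq_minl.
rewrite -(cat_take_drop j.+1 s) count_cat.
have /eqP -> : count (fun y => y <= x) (take j.+1 s) == size (take j.+1 s).
  rewrite -all_count; apply/(all_nthP 0) => i; rewrite size_takel // => ilt.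
  by rewrite nth_take // nth_sorted_leq.
by rewrite size_takel // leq_addr.
Qed.

Lemma sorted_dominates_interlace M A B : sorted leq A -> sorted leq B -> dominates M A B ->
  nth 0 A (size B) = M /\ forall j, j < size B -> nth 0 B j < nth 0 A j.
Proof.
move=> sA sB [szAB MA AM BM hall]; split.
  apply/eqP; rewrite eqn_leq (allP AM) ?mem_nth ?szAB //=.
  rewrite -[in X in X <= _](nth_index 0 MA).
  have iM : index M A < size A by rewrite index_mem.
  by apply: nth_sorted_leq => //; lia.
move=> j jB; rewrite ltnNge; apply/negP => leBA.
have xM : nth 0 A j < M := leq_ltn_trans leBA (allP BM _ (mem_nth 0 jB)).
have jA : j < size A by rewrite szAB leqW.
have /andP[_ cntA] := count_nth_sorted sA jA.
have /andP[cntB _] := count_nth_sorted sB jB.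
have : count (fun y => y < nth 0 A j) B <= count (fun y => y < nth 0 B j) B.
  by apply: sub_count => y /leq_trans; apply.
by have := hall _ xM; lia.
Qed.

Definition interlaced_expansion (P : {poly int}) (s d : nat) : Prop :=
  exists (t : nat) (delta e : nat -> nat),
    t <= s /\
    (forall i j, 1 <= i <= t.+1 -> 1 <= j <= t -> delta i <> e j) /\
    0 < delta 1 /\ delta t.+1 = d /\
    (forall j, 1 <= j <= t -> delta j <= delta j.+1) /\
    (forall j, 1 <= j < t -> e j <= e j.+1) /\
    (forall j, 1 <= j <= t -> e j < d) /\
    (forall j, 1 <= j <= t -> e j < delta j) /\
    P = (\sum_(1 <= j < t.+2) (1 + 'X) ^+ delta j - \sum_(1 <= j < t.+1) (1 + 'X) ^+ e j)%R.

Lemma dominates_interlaced_expansion M A B : dominates M A B -> all (fun a => 0 < a) A ->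
  interlaced_expansion
    (\sum_(a <- A) (1 + 'X) ^+ a - \sum_(b <- B) (1 + 'X) ^+ b)%R (size B) M.
Proof.
move=> domAB posA; have [A' [B' [C [pA pB domAB' disjAB']]]] := dominates_cancel_common domAB.
pose sa := sort leq A'; pose sb := sort leq B'.
have [psa psb] : perm_eq A' sa /\ perm_eq B' sb by split; rewrite perm_sym perm_sort.
have ssa : sorted leq sa := sort_sorted leq_total A'.
have ssb : sorted leq sb := sort_sorted leq_total B'.
have dom := perm_dominates psa psb domAB'.
have [lastM interlace] := sorted_dominates_interlace ssa ssb dom.
have [szab _ _ sbM _] := dom.
have sa_nth i : i < size sa -> nth 0 sa i \in A' by rewrite (perm_mem psa); apply: mem_nth.
have sb_nth i : i < size sb -> nth 0 sb i \in B' by rewrite (perm_mem psb); apply: mem_nth.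
exists (size sb), (fun j => nth 0 sa j.-1), (fun j => nth 0 sb j.-1).
split; first by rewrite -(perm_size psb) (perm_size pB) size_cat leq_addr.
split.
  move=> [|i] [|j] //= it jt eq_ij.
  by have := disjAB' _ (sa_nth i _); rewrite eq_ij sb_nth ?szab // => /(_ it).
split; first by apply: (allP posA); rewrite (perm_mem pA) mem_cat sa_nth ?szab.
split; first by [].
split; first by move=> [|j] // /andP[_ jB]; apply: nth_sorted_leq; rewrite ?szab /=.
split; first by move=> [|j] // /andP[_ jB]; apply: nth_sorted_leq => /=.
split; first by move=> [|j] // /andP[_ jB]; apply: (allP sbM); rewrite mem_nth.
split; first by move=> [|j] // /andP[_ jB]; apply: interlace.
rewrite (perm_big _ pA) (perm_big _ pB) !big_cat /= opprD addrACA subrr addr0.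
rewrite (perm_big _ psa) (perm_big _ psb) (big_nth 0 (r := sa)) (big_nth 0 (r := sb)).
by rewrite !big_add1 szab.
Qed.

Section FacePolynomial.

Variable T : finType.
Implicit Types (D : {set {set T}}) (X : {set T}).

Definition fpoly D : {poly int} := (\sum_(F in D) 'X^#|F|)%R.

Lemma fpolyUI D1 D2 : (fpoly (D1 :|: D2) + fpoly (D1 :&: D2) = fpoly D1 + fpoly D2)%R.
Proof.
rewrite /fpoly (big_setID (A := D1 :|: D2) D1) (big_setID (A := D2) D1).
by rewrite setUK setDUl setDv set0U /= [D1 :&: D2]setIC addrAC addrA.
Qed.

Lemma fpoly_by_size D N : (forall F, F \in D -> #|F| <= N) ->
  fpoly D = (\sum_(0 <= i < N.+1) #|[set F in D | #|F| == i]|%:R *: 'X^i)%R.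
Proof.
move=> DN; rewrite /fpoly (partition_big (fun F : {set T} => inord #|F| : 'I_N.+1) xpredT) //=.
rewrite big_mkord; apply: eq_bigr => i _; rewrite scaler_nat -sumr_const.
apply: eq_big => [F | F /andP[FD /eqP <-]]; last by rewrite inordK // ltnS DN.
rewrite !inE; case FD: (F \in D) => //=.
by rewrite -val_eqE /= inordK // ltnS DN.
Qed.

Lemma fpoly_powerset X : fpoly (powerset X) = ((1 + 'X) ^+ #|X|)%R.
Proof.
rewrite (@fpoly_by_size _ #|X|) => [|F]; last by rewrite powersetE => /subset_leq_card.
rewrite addrC exprD1n big_mkord; apply: eq_bigr => i _.
rewrite scaler_nat -cards_draws; congr (_ *+ _)%R.
by apply: eq_card => F; rewrite !inE.
Qed.

End FacePolynomial.

Section Complexes.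

Variable n : nat.
Implicit Types (F G H h : {set 'I_n}) (S D : {set {set 'I_n}}).

Definition antichain S := {in S &, forall F G, F \subset G -> F = G}.

Lemma mem_gen S F : reflect (exists2 G, G \in S & F \subset G) (F \in gen S).
Proof.
rewrite inE; apply: (iffP existsP) => [[G /andP[GS FG]] | [G GS FG]]; exists G => //.
by rewrite GS.
Qed.

Lemma gen_set1 h : gen [set h] = powerset h.
Proof.
apply/setP => F; rewrite powersetE.
by apply/mem_gen/idP => [[G /set1P -> //] | Fh]; exists h; rewrite ?set11.
Qed.

Lemma gen_setU1 h S : gen (h |: S) = powerset h :|: gen S.
Proof.
apply/setP => F; rewrite in_setU powersetE.
apply/mem_gen/orP => [[G /setU1P[-> | GS] FG] | [Fh | /mem_gen[G GS FG]]].
- by left.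
- by right; apply/mem_gen; exists G.
- by exists h; rewrite ?setU11.
- by exists G; rewrite ?setU1r.
Qed.

Lemma facetsP D F :
  reflect (F \in D /\ forall G, G \in D -> F \subset G -> G = F) (F \in facets D).
Proof.
rewrite inE; apply: (iffP andP) => [[FD /forall_inP maxF] | [FD maxF]].
  by split=> // G GD FG; apply/eqP; apply: (implyP (maxF G GD)).
by split=> //; apply/forall_inP => G GD; apply/implyP => /(maxF G GD) ->.
Qed.

Lemma sub_facets_antichain D S : S \subset facets D -> antichain S.
Proof.
move=> SD F G /(subsetP SD) /facetsP[_ maxF] /(subsetP SD) /facetsP[GD _] FG.
exact/esym/maxF.
Qed.

Lemma facets_gen S : antichain S -> facets (gen S) = S.
Proof.
move=> acS; apply/setP => F; apply/facetsP/idP => [[/mem_gen[G GS FG] maxF] | FS].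
  by rewrite -(maxF G) //; apply/mem_gen; exists G.
split=> [|G /mem_gen[H HS GH] FG]; first by apply/mem_gen; exists F.
have FH : F = H := acS F H FS HS (subset_trans FG GH).
by apply/eqP; rewrite eqEsubset FG andbT FH.
Qed.

Lemma gen_facets D : (forall F G, F \in D -> G \subset F -> G \in D) -> gen (facets D) = D.
Proof.
move=> closedD; apply/setP => F; apply/mem_gen/idP => [[G /facetsP[GD _] FG] | FD].
  exact: closedD GD FG.
pose P := [pred G | (G \in D) && (F \subset G)].
have [|G /andP[GD FG] maxG] := @arg_maxnP _ F P (fun G => #|G|); first by rewrite /= FD subxx.
exists G => //; apply/facetsP; split=> // H HD GH.
by apply/eqP; rewrite eq_sym eqEcard GH; apply: maxG; rewrite /= HD (subset_trans FG GH).
Qed.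

Lemma antichain_card_setI S G h : antichain S -> G \in S -> h \in S -> G != h ->
  #|G :&: h| < #|h|.
Proof.
move=> acS GS hS Gh; apply: proper_card; rewrite properEneq subsetIr andbT.
by apply: contraNneq Gh => /setIidPr hG; rewrite (acS h G hS GS hG).
Qed.

Lemma gen_setI_powerset S G h : G \in S -> (forall H, H \in S -> H :&: h \subset G) ->
  gen S :&: powerset h = powerset (G :&: h).
Proof.
move=> GS branch; apply/setP => F; rewrite in_setI !powersetE subsetI.
apply/andP/andP => [[/mem_gen[H HS FH] Fh] | [FG Fh]]; split=> //.
  by apply: subset_trans (branch H HS); rewrite subsetI FH Fh.
by apply/mem_gen; exists G.
Qed.

Lemma fpoly_add_leaf S h : antichain (h |: S) -> h \notin S -> is_leaf (gen (h |: S)) h ->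
  exists2 G, G \in S & [/\ #|G :&: h| < #|h|, #|G :&: h| < #|G|
    & (fpoly (gen (h |: S)) + (1 + 'X) ^+ #|G :&: h|
       = fpoly (gen S) + (1 + 'X) ^+ #|h|)%R].
Proof.
move=> acS hS [_ [G [Gfacet Gh] branch]]; rewrite facets_gen // in Gfacet branch.
have GS : G \in S by move: Gfacet; rewrite in_setU1 (negbTE Gh).
have branchS H : H \in S -> H :&: h \subset G.
  move=> HS; apply: subset_trans (subsetIl G h).
  by apply: branch; [rewrite setU1r | apply: contraNneq hS => <-].
exists G => //; split.
- exact: antichain_card_setI acS (setU1r h GS) (setU11 h S) Gh.
- rewrite setIC; apply: antichain_card_setI acS (setU11 h S) (setU1r h GS) _.
  by rewrite eq_sym.
by rewrite -!fpoly_powerset -(gen_setI_powerset GS branchS) setIC gen_setU1 fpolyUI addrC.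
Qed.

End Complexes.

Section LeafOrder.

Variables (n : nat) (D : {set {set 'I_n}}) (hs : seq {set 'I_n}).
Hypotheses (hs_uniq : uniq hs) (hs_facets : [set F in hs] = facets D).
Hypothesis hs_leaf :
  forall j, 0 < j < size hs -> is_leaf (gen [set F in take j.+1 hs]) (nth set0 hs j).

Lemma prefix_decomposition k : 0 < k <= size hs -> exists M B,
  dominates M [seq #|F| | F : {set 'I_n} <- take k hs] B /\
  fpoly (gen [set F in take k hs])
    = (\sum_(a <- [seq #|F| | F : {set 'I_n} <- take k hs]) (1 + 'X) ^+ a
       - \sum_(b <- B) (1 + 'X) ^+ b)%R.
Proof.
elim: k => [//|[|k] IH] /andP[_ k_lt].
  exists #|nth set0 hs 0|, [::]; rewrite (take_nth set0 k_lt) take0 /= big_seq1 big_nil subr0.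
  split; first exact: dominates1.
  have -> : [set F in [:: nth set0 hs 0]] = [set nth set0 hs 0].
    by apply/setP => F; rewrite !inE.
  by rewrite gen_set1 fpoly_powerset.
have [M [B [domAB fpolyE]]] := IH (ltnW k_lt).
set h := nth set0 hs k.+1; set S := [set F in take k.+1 hs].
have takeS : take k.+2 hs = rcons (take k.+1 hs) h := take_nth set0 k_lt.
have prefixS : [set F in take k.+2 hs] = h |: S.
  by apply/setP => F; rewrite takeS !inE mem_rcons in_cons.
have acS : antichain (h |: S).
  rewrite -prefixS; apply: (sub_facets_antichain (D := D)); rewrite -hs_facets.
  by apply/subsetP => F; rewrite !inE => /mem_take.
have hS : h \notin S.
  by rewrite inE; have := take_uniq k.+2 hs_uniq; rewrite takeS rcons_uniq => /andP[].
have leaf_h : is_leaf (gen (h |: S)) h by rewrite -prefixS; apply: hs_leaf; rewrite /= k_lt.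
have [G GS [ltGh_h ltGh_G fstep]] := fpoly_add_leaf acS hS leaf_h.
have [_ _ AM _ _] := domAB.
have GM : #|G| <= M by apply: (allP AM); apply: map_f; rewrite inE in GS.
exists (maxn M #|h|), (rcons B #|G :&: h|); split.
  by rewrite takeS map_rcons; apply: dominates_rcons => //; apply: leq_trans GM.
apply: (addIr ((1 + 'X) ^+ #|G :&: h|)%R).
rewrite prefixS fstep fpolyE takeS map_rcons -!cats1 !big_cat !big_seq1 /=.
by rewrite opprD addrA subrK addrAC.
Qed.

End LeafOrder.

Lemma quasi_forest_decomposition n (D : {set {set 'I_n}}) :
  0 < n -> simplicial_complex D -> quasi_forest D ->
  exists A B, [/\ dominates (dsize D) A B, all (fun a => 0 < a) A, size A = #|facets D|
    & fpoly D = (\sum_(a <- A) (1 + 'X) ^+ a - \sum_(b <- B) (1 + 'X) ^+ b)%R].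
Proof.
move=> n_gt0 [singD closedD] [hs [hs_uniq hs_facets hs_leaf]].
have genD : gen [set F in hs] = D by rewrite hs_facets gen_facets.
have [G GS _] : exists2 G, G \in [set F in hs] & [set Ordinal n_gt0] \subset G.
  by apply/mem_gen; rewrite genD.
have hs_gt0 : 0 < size hs by move: GS; rewrite inE; case: (hs).
have := prefix_decomposition hs_uniq hs_facets hs_leaf (k := size hs).
rewrite hs_gt0 leqnn take_size genD => /(_ isT) [M [B [domAB fpolyE]]].
have [_ MA AM _ _] := domAB.
have dM : dsize D = M.
  apply/eqP; rewrite eqn_leq; apply/andP; split.
    apply/bigmax_leqP => F; rewrite -genD => /mem_gen[h hS Fh].
    by rewrite inE in hS; apply: leq_trans (subset_leq_card Fh) (allP AM _ (map_f _ hS)).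
  case/mapP: MA => h hs_h ->; apply: leq_bigmax_cond.
  by rewrite -genD; apply/mem_gen; exists h; rewrite ?inE.
exists [seq #|F| | F : {set 'I_n} <- hs], B; split; rewrite ?dM //.
  apply/allP => _ /mapP[h hs_h ->].
  have /facetsP[_ maxh] : h \in facets D by rewrite -hs_facets inE.
  rewrite card_gt0; apply/eqP => h0.
  have := maxh _ (singD (Ordinal n_gt0)); rewrite h0 sub0set => /(_ isT) /eqP.
  by rewrite -cards_eq0 cards1.
by rewrite size_map -hs_facets cardsE; apply/esym/card_uniqP.
Qed.

Local Open Scope ring_scope.

Theorem lemma2p2 (n : nat) (D : {set {set 'I_n}}) (s : nat) :
  (0 < n)%N ->
  simplicial_complex D ->
  quasi_forest D ->
  #|facets D| = s.+1 ->
  let d := dsize D in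
  exists (t : nat) (delta e : nat -> nat),
    (t <= s)%N /\
        (forall i j, (1 <= i <= t.+1)%N -> (1 <= j <= t)%N -> delta i <> e j) /\
        (0 < delta 1)%N /\ delta t.+1 = d /\
        (forall j, (1 <= j <= t)%N -> (delta j <= delta j.+1)%N) /\
        (forall j, (1 <= j < t)%N -> (e j <= e j.+1)%N) /\
        (forall j, (1 <= j <= t)%N -> (e j < d)%N) /\
        (forall j, (1 <= j <= t)%N -> (e j < delta j)%N) /\
        \sum_(0 <= i < d.+1) (fnum D i)%:R *: 'X^i
          = \sum_(1 <= j < t.+2) (1 + 'X) ^+ delta j
            - \sum_(1 <= j < t.+1) (1 + 'X) ^+ e j :> {poly int}.
Proof.
move=> n_gt0 scD qfD card_facets d.
have [A [B [domAB posA sizeA fpolyD]]] := quasi_forest_decomposition n_gt0 scD qfD.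
have sizeB : size B = s by have [szAB _ _ _ _] := domAB; apply/succn_inj; rewrite -szAB sizeA.
have dD F : F \in D -> (#|F| <= d)%N by move=> FD; apply: leq_bigmax_cond.
rewrite -sizeB -(fpoly_by_size dD) fpolyD.
exact: dominates_interlaced_expansion.
Qed.
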